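(* Let $\xi=(\tau_L,\delta_L,\tau_R,\delta_R)\in\Phi$ and suppose $J_2(\xi)<1$. Then the set $\Xi=\left\{(x,y)\in\mathbb{R}^2: \|f_\xi^{-i}(x,y)\|\to\infty \text{ as } i\to\infty\right\}$ is dense in $\mathbb{R}^2$.
   Context: For $\xi=(\tau_L,\delta_L,\tau_R,\delta_R)\in\mathbb{R}^4$ define $f_\xi(x,y)=(\tau_L x+y+1,\,-\delta_L x)$ if $x\le 0$ and $f_\xi(x,y)=(\tau_R x+y+1,\,-\delta_R x)$ if $x\ge 0$. Let $\Phi=\{\xi: \tau_L>\delta_L+1,\ \delta_L>0,\ \tau_R<-(\delta_R+1),\ \delta_R>0\}$; for $\xi\in\Phi$, $f_\xi$ is a homeomorphism, $\begin{bmatrix}\tau_L&1\\-\delta_L&0\end{bmatrix}$ has real eigenvalues $0<\lambda_L^s<1<\lambda_L^u$ and $\begin{bmatrix}\tau_R&1\\-\delta_R&0\end{bmatrix}$ has real eigenvalues $\lambda_R^u<-1<\lambda_R^s<0$. Let $J_2(\xi)=\max\left\{\lambda_L^s,\frac{\sqrt2\,\lambda_L^s}{\lambda_L^s+1}\right\}+\max\left\{|\lambda_R^s|,\frac{\sqrt2\,|\lambda_R^s|}{|\lambda_R^s|+1}\right\}$. $\|\cdot\|$ is the Euclidean norm. *)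

From Stdlib Require Import Reals Lra.
Open Scope R_scope.

Record params := Params { tauL : R; deltaL : R; tauR : R; deltaR : R }.

Definition fxi (xi : params) (p : R * R) : R * R :=
  let (x, y) := p in
  if Rle_dec x 0
  then (tauL xi * x + y + 1, - deltaL xi * x)
  else (tauR xi * x + y + 1, - deltaR xi * x).

Definition inPhi (xi : params) : Prop :=
  tauL xi > deltaL xi + 1 /\ deltaL xi > 0 /\
  tauR xi < - (deltaR xi + 1) /\ deltaR xi > 0.

(* Stable eigenvalues: roots of lambda^2 - tau lambda + delta.
   lambda_L^s is the smaller root (in (0,1)); lambda_R^s is the larger root
   (in (-1,0)) since tauR < 0. *)
Definition lamLs (xi : params) : R :=
  (tauL xi - sqrt (tauL xi ^ 2 - 4 * deltaL xi)) / 2.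
Definition lamRs (xi : params) : R :=
  (tauR xi + sqrt (tauR xi ^ 2 - 4 * deltaR xi)) / 2.

Definition J2 (xi : params) : R :=
  Rmax (lamLs xi) (sqrt 2 * lamLs xi / (lamLs xi + 1)) +
  Rmax (Rabs (lamRs xi)) (sqrt 2 * Rabs (lamRs xi) / (Rabs (lamRs xi) + 1)).

Definition norm2 (p : R * R) : R := sqrt (fst p ^ 2 + snd p ^ 2).

Definition norm_to_infty (u : nat -> R * R) : Prop :=
  forall M : R, exists N : nat, forall i : nat, (N <= i)%nat -> M < norm2 (u i).

Definition dense2 (S : R * R -> Prop) : Prop :=
  forall (p : R * R) (eps : R), eps > 0 ->
    exists q, S q /\ norm2 (fst q - fst p, snd q - snd p) < eps.

From Stdlib Require Import Reals Lra Psatz Lia.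
Open Scope R_scope.

(* On the upper (lower) half-plane g = f^-1 is the inverse of the left (right)
   linear piece. If that piece has signed eigenvalues lam, mu, it maps a graph
   {x = 1 + D + r y} onto another such graph, multiplying the y-coordinate by
   r + 1/lam + 1/mu. For slopes in the cone [-1/muL, -1/muR] the new slope stays
   in the cone, the offset D stays bounded and the stretch is at least 1/|lam|.
   Hence a vertical segment in any ball, cut at y = 0 and keeping the better
   half, grows by the factor 1/(lamL + |lamR|) > 1 under each application of g
   (this is where J2 < 1 enters). A long enough segment meets, at most one step
   later, a region on which g multiplies y by (1/lamL + 1)/2 > 1 and which g maps
   into itself, so its points escape to infinity. *)

Definition inv_piece (tau delta : R) (p : R * R) : R * R :=
  (- snd p / delta, fst p + tau * snd p / delta - 1).

Lemma fxi_inv_piece_left xi x y : deltaL xi > 0 -> 0 <= y ->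
  fxi xi (inv_piece (tauL xi) (deltaL xi) (x, y)) = (x, y).
Proof.
  intros Hd Hy; unfold fxi, inv_piece; cbn [fst snd].
  destruct (Rle_dec (- y / deltaL xi) 0) as [_ | Hpos].
  - f_equal; field; lra.
  - apply Rnot_le_lt in Hpos.
    assert (E : - y = - y / deltaL xi * deltaL xi) by (field; lra).
    nra.
Qed.

Lemma fxi_inv_piece_right xi x y : deltaR xi > 0 -> y <= 0 ->
  fxi xi (inv_piece (tauR xi) (deltaR xi) (x, y)) = (x, y).
Proof.
  intros Hd Hy; unfold fxi, inv_piece; cbn [fst snd].
  destruct (Rle_dec (- y / deltaR xi) 0) as [Hneg | _].
  - assert (Hy0 : y = 0).
    { assert (E : - y = - y / deltaR xi * deltaR xi) by (field; lra).
      nra. }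
    subst y; f_equal; field; lra.
  - f_equal; field; lra.
Qed.

Lemma inverse_on_left xi g p : deltaL xi > 0 -> (forall q, g (fxi xi q) = q) ->
  0 <= snd p -> g p = inv_piece (tauL xi) (deltaL xi) p.
Proof.
  intros Hd Hgf Hp; destruct p as [x y].
  rewrite <- (Hgf (inv_piece _ _ (x, y))), fxi_inv_piece_left; auto.
Qed.

Lemma inverse_on_right xi g p : deltaR xi > 0 -> (forall q, g (fxi xi q) = q) ->
  snd p <= 0 -> g p = inv_piece (tauR xi) (deltaR xi) p.
Proof.
  intros Hd Hgf Hp; destruct p as [x y].
  rewrite <- (Hgf (inv_piece _ _ (x, y))), fxi_inv_piece_right; auto.
Qed.

Lemma quadratic_roots_around t d z : z ^ 2 - t * z + d < 0 ->
  let e := sqrt (t ^ 2 - 4 * d) in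
  (t - e) / 2 < z < (t + e) / 2 /\ (t - e) / 2 * ((t + e) / 2) = d.
Proof.
  intros Hz e.
  assert (Hdisc : 0 <= t ^ 2 - 4 * d) by (pose proof (pow2_ge_0 (2 * z - t)); nra).
  pose proof (sqrt_sqrt _ Hdisc) as Hee; pose proof (sqrt_pos (t ^ 2 - 4 * d)) as He.
  fold e in Hee, He.
  assert ((z - (t - e) / 2) * (z - (t + e) / 2) < 0) by nra.
  split; [split |]; nra.
Qed.

Lemma lamLs_spec xi : inPhi xi ->
  0 < lamLs xi /\ 1 < tauL xi - lamLs xi /\ lamLs xi * (tauL xi - lamLs xi) = deltaL xi.
Proof.
  intros (HtL & HdL & _).
  destruct (quadratic_roots_around (tauL xi) (deltaL xi) 1) as [[H1 H2] Hprod]; [nra |].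
  unfold lamLs; set (e := sqrt _) in *.
  replace (tauL xi - (tauL xi - e) / 2) with ((tauL xi + e) / 2) by field.
  repeat split; nra.
Qed.

Lemma lamRs_spec xi : inPhi xi ->
  lamRs xi < 0 /\ tauR xi - lamRs xi < -1 /\ lamRs xi * (tauR xi - lamRs xi) = deltaR xi.
Proof.
  intros (_ & _ & HtR & HdR).
  destruct (quadratic_roots_around (tauR xi) (deltaR xi) (-1)) as [[H1 H2] Hprod]; [nra |].
  unfold lamRs; set (e := sqrt _) in *.
  replace (tauR xi - (tauR xi + e) / 2) with ((tauR xi - e) / 2) by field.
  repeat split; nra.
Qed.

Lemma J2_ge_stable_sum xi : lamRs xi < 0 -> lamLs xi - lamRs xi <= J2 xi.
Proof.
  intros HR; unfold J2; rewrite Rabs_left by exact HR.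
  pose proof (Rmax_l (lamLs xi) (sqrt 2 * lamLs xi / (lamLs xi + 1))).
  pose proof (Rmax_l (- lamRs xi) (sqrt 2 * - lamRs xi / (- lamRs xi + 1))).
  lra.
Qed.

Definition graph_pt (D r y : R) : R * R := (1 + D + r * y, y).

Definition stretch (lam mu r : R) : R := r + / lam + / mu.

Definition next_slope (lam mu r : R) : R := - / (lam * mu * stretch lam mu r).

Lemma inv_piece_graph_pt lam mu D r y :
  lam <> 0 -> mu <> 0 -> stretch lam mu r <> 0 ->
  inv_piece (lam + mu) (lam * mu) (graph_pt D r y) =
  graph_pt (- next_slope lam mu r * D - 1) (next_slope lam mu r) (D + stretch lam mu r * y).
Proof.
  intros Hl Hm Hs; unfold inv_piece, graph_pt, next_slope; cbn [fst snd].
  f_equal.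
  - field; auto.
  - unfold stretch; field; auto.
Qed.

Lemma stretch_expands lam mu r : lam <> 0 -> mu <> 0 -> 0 <= lam * (r + / mu) ->
  1 <= lam * stretch lam mu r.
Proof.
  intros Hl Hm H; unfold stretch.
  replace (lam * (r + / lam + / mu)) with (lam * (r + / mu) + 1) by (field; auto).
  lra.
Qed.

Lemma next_slope_scaled lam mu r : mu <> 0 -> 1 <= lam * stretch lam mu r ->
  exists t, 0 < t <= 1 /\ next_slope lam mu r = - / mu * t.
Proof.
  intros Hm Hs; exists (/ (lam * stretch lam mu r)); split.
  - split; [apply Rinv_0_lt_compat; lra |].
    rewrite <- Rinv_1; apply Rinv_le_contravar; lra.
  - assert (stretch lam mu r <> 0 /\ lam <> 0) as [Hs0 Hl0]
      by (split; intros H0; rewrite H0 in Hs; lra).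
    unfold next_slope; field; auto.
Qed.

Lemma offset_bound B c r D : Rabs r <= c -> Rabs D <= B -> 1 <= B * (1 - c) ->
  Rabs (- r * D - 1) <= B.
Proof.
  intros Hr HD HB.
  assert (Rabs r * Rabs D <= c * B) by (apply Rmult_le_compat; auto using Rabs_pos).
  unfold Rminus; eapply Rle_trans; [apply Rabs_triang |].
  rewrite Rabs_Ropp, Ropp_mult_distr_l_reverse, Rabs_Ropp, Rabs_mult, Rabs_R1.
  nra.
Qed.

Definition image (f : R * R -> R * R) (S : R * R -> Prop) (q : R * R) : Prop :=
  exists p, S p /\ f p = q.

Lemma iter_image f U n q : Nat.iter n (image f) U q -> exists p, U p /\ Nat.iter n f p = q.
Proof.
  revert q; induction n as [| n IH]; intros q Hq.
  - exists q; split; [exact Hq | reflexivity].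
  - destruct Hq as (q' & Hq' & <-).
    destruct (IH q' Hq') as (p & Hp & <-).
    exists p; split; [exact Hp | reflexivity].
Qed.

Lemma norm2_ge_snd p : 0 <= snd p -> snd p <= norm2 p.
Proof.
  intros H; unfold norm2; rewrite <- (sqrt_pow2 (snd p)) at 1 by exact H.
  apply sqrt_le_1_alt; pose proof (pow2_ge_0 (fst p)); lra.
Qed.

Lemma norm2_vertical t : norm2 (0, t) = Rabs t.
Proof.
  unfold norm2; cbn [fst snd].
  replace (0 ^ 2 + t ^ 2) with (Rsqr t) by (unfold Rsqr; ring).
  apply sqrt_Rsqr_abs.
Qed.

Section Segments.

Variables lamL muL lamR muR B : R.
Hypothesis lamL_pos : 0 < lamL.
Hypothesis muL_gt1 : 1 < muL.
Hypothesis lamR_neg : lamR < 0.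
Hypothesis muR_lt_m1 : muR < -1.
Hypothesis stable_sum_lt1 : lamL - lamR < 1.
Hypothesis B_left : 1 <= B * (1 - / muL).
Hypothesis B_right : 1 <= B * (1 + / muR).

Variable g : R * R -> R * R.
Hypothesis g_left : forall p, 0 <= snd p -> g p = inv_piece (lamL + muL) (lamL * muL) p.
Hypothesis g_right : forall p, snd p <= 0 -> g p = inv_piece (lamR + muR) (lamR * muR) p.

Lemma inv_muL_bounds : 0 < / muL < 1.
Proof.
  split; [apply Rinv_0_lt_compat; lra |].
  rewrite <- Rinv_1; apply Rinv_lt_contravar; lra.
Qed.

Lemma inv_muR_bounds : -1 < / muR < 0.
Proof.
  replace muR with (- - muR) by ring; rewrite Rinv_opp.
  assert (0 < / - muR < 1); [| lra].
  split; [apply Rinv_0_lt_compat; lra |].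
  rewrite <- Rinv_1; apply Rinv_lt_contravar; lra.
Qed.

Definition in_cone (r : R) : Prop := - / muL <= r <= - / muR.

Lemma stretch_left r : in_cone r -> 1 <= lamL * stretch lamL muL r.
Proof.
  intros [Hr _]; apply stretch_expands; nra.
Qed.

Lemma stretch_right r : in_cone r -> 1 <= lamR * stretch lamR muR r.
Proof.
  intros [_ Hr]; apply stretch_expands; nra.
Qed.

Lemma next_slope_left r : in_cone r ->
  in_cone (next_slope lamL muL r) /\ Rabs (next_slope lamL muL r) <= / muL.
Proof.
  intros Hr; pose proof inv_muL_bounds; pose proof inv_muR_bounds.
  destruct (next_slope_scaled lamL muL r) as (t & Ht & ->); [lra | now apply stretch_left |].
  unfold in_cone; rewrite Rabs_left1 by nra.
  split; [split |]; nra.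
Qed.

Lemma next_slope_right r : in_cone r ->
  in_cone (next_slope lamR muR r) /\ Rabs (next_slope lamR muR r) <= - / muR.
Proof.
  intros Hr; pose proof inv_muL_bounds; pose proof inv_muR_bounds.
  destruct (next_slope_scaled lamR muR r) as (t & Ht & ->); [lra | now apply stretch_right |].
  unfold in_cone; rewrite Rabs_pos_eq by nra.
  split; [split |]; nra.
Qed.

Lemma g_graph_left D r : in_cone r -> Rabs D <= B ->
  exists D' r', in_cone r' /\ Rabs D' <= B /\
  forall y, 0 <= y -> g (graph_pt D r y) = graph_pt D' r' (D + stretch lamL muL r * y).
Proof.
  intros Hr HD; pose proof (stretch_left r Hr) as Hs.
  destruct (next_slope_left r Hr) as [Hc Ha].
  exists (- next_slope lamL muL r * D - 1), (next_slope lamL muL r).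
  split; [exact Hc | split; [now apply offset_bound with (/ muL) |]].
  intros y Hy; rewrite g_left by exact Hy.
  apply inv_piece_graph_pt; try lra.
  intros H0; rewrite H0, Rmult_0_r in Hs; lra.
Qed.

Lemma g_graph_right D r : in_cone r -> Rabs D <= B ->
  exists D' r', in_cone r' /\ Rabs D' <= B /\
  forall y, y <= 0 -> g (graph_pt D r y) = graph_pt D' r' (D + stretch lamR muR r * y).
Proof.
  intros Hr HD; pose proof (stretch_right r Hr) as Hs.
  destruct (next_slope_right r Hr) as [Hc Ha].
  exists (- next_slope lamR muR r * D - 1), (next_slope lamR muR r).
  split; [exact Hc | split; [apply offset_bound with (- / muR); auto; lra |]].
  intros y Hy; rewrite g_right by exact Hy.
  apply inv_piece_graph_pt; try lra.
  intros H0; rewrite H0, Rmult_0_r in Hs; lra.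
Qed.

Definition good_segment (S : R * R -> Prop) (D r a b : R) : Prop :=
  a < b /\ in_cone r /\ Rabs D <= B /\ forall y, a <= y <= b -> S (graph_pt D r y).

Lemma good_segment_restrict S D r a b a1 b1 : good_segment S D r a b ->
  a <= a1 -> a1 < b1 -> b1 <= b -> good_segment S D r a1 b1.
Proof.
  intros (_ & Hr & HD & HS) H1 H2 H3.
  refine (conj H2 (conj Hr (conj HD _))).
  intros y Hy; apply HS; lra.
Qed.

Lemma good_segment_left S D r a b : good_segment S D r a b -> 0 <= a ->
  exists D' r', good_segment (image g S) D' r'
    (D + stretch lamL muL r * a) (D + stretch lamL muL r * b).
Proof.
  intros (Hab & Hr & HD & HS) Ha.
  pose proof (stretch_left r Hr) as Hs.
  set (s := stretch lamL muL r) in *.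
  assert (Hs0 : 0 < s) by nra.
  destruct (g_graph_left D r Hr HD) as (D' & r' & Hr' & HD' & Hg).
  exists D', r'; refine (conj _ (conj Hr' (conj HD' _))); [nra |].
  intros y' Hy'.
  set (y := (y' - D) / s).
  assert (Ey' : y' = D + s * y) by (unfold y; field; lra).
  assert (Hy : a <= y <= b).
  { split; apply Rmult_le_reg_l with s; nra. }
  exists (graph_pt D r y); split; [apply HS, Hy |].
  rewrite Ey'; apply Hg; lra.
Qed.

Lemma good_segment_right S D r a b : good_segment S D r a b -> b <= 0 ->
  exists D' r', good_segment (image g S) D' r'
    (D + stretch lamR muR r * b) (D + stretch lamR muR r * a).
Proof.
  intros (Hab & Hr & HD & HS) Hb.
  pose proof (stretch_right r Hr) as Hs.
  set (s := stretch lamR muR r) in *.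
  assert (Hs0 : s < 0) by nra.
  destruct (g_graph_right D r Hr HD) as (D' & r' & Hr' & HD' & Hg).
  exists D', r'; refine (conj _ (conj Hr' (conj HD' _))); [nra |].
  intros y' Hy'.
  set (y := (y' - D) / s).
  assert (Ey' : y' = D + s * y) by (unfold y; field; lra).
  assert (Hy : a <= y <= b).
  { split; apply Rmult_le_reg_l with (- s); nra. }
  exists (graph_pt D r y); split; [apply HS, Hy |].
  rewrite Ey'; apply Hg; lra.
Qed.

Lemma good_segment_grow S D r a b : good_segment S D r a b ->
  exists D' r' a' b', good_segment (image g S) D' r' a' b' /\
    b - a <= (lamL - lamR) * (b' - a').
Proof.
  intros Hseg; pose proof Hseg as (Hab & Hr & _).
  pose proof (stretch_left r Hr) as HsL; pose proof (stretch_right r Hr) as HsR.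
  set (sL := stretch lamL muL r) in *; set (sR := stretch lamR muR r) in *.
  assert (HsL0 : 0 < sL) by nra; assert (HsR0 : sR < 0) by nra.
  destruct (Rle_lt_dec 0 a) as [Ha | Ha]; [| destruct (Rle_lt_dec b 0) as [Hb | Hb]].
  - destruct (good_segment_left S D r a b Hseg Ha) as (D' & r' & Hseg').
    do 4 eexists; split; [exact Hseg' | fold sL sR].
    assert (1 <= (lamL - lamR) * sL) by nra.
    nra.
  - destruct (good_segment_right S D r a b Hseg Hb) as (D' & r' & Hseg').
    do 4 eexists; split; [exact Hseg' | fold sL sR].
    assert (1 <= - (lamL - lamR) * sR) by nra.
    nra.
  - destruct (Rle_lt_dec (- a * lamL) (- lamR * b)) as [Hc | Hc].
    + pose proof (good_segment_restrict S D r a b 0 b Hseg) as Hseg0.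
      destruct (good_segment_left S D r 0 b) as (D' & r' & Hseg'); [apply Hseg0; lra | lra |].
      do 4 eexists; split; [exact Hseg' | fold sL sR].
      assert (- a <= - lamR * sL * b) by nra.
      nra.
    + pose proof (good_segment_restrict S D r a b a 0 Hseg) as Hseg0.
      destruct (good_segment_right S D r a 0) as (D' & r' & Hseg'); [apply Hseg0; lra | lra |].
      do 4 eexists; split; [exact Hseg' | fold sL sR].
      assert (b <= lamL * sR * a) by nra.
      nra.
Qed.

Lemma good_segment_iter U D r a b : good_segment U D r a b -> forall n,
  exists D' r' a' b', good_segment (Nat.iter n (image g) U) D' r' a' b' /\
    b - a <= (lamL - lamR) ^ n * (b' - a').
Proof.
  intros Hseg n; induction n as [| n IH].
  - exists D, r, a, b; split; [exact Hseg | simpl; lra].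
  - destruct IH as (D1 & r1 & a1 & b1 & Hseg1 & Hlen1).
    destruct (good_segment_grow _ _ _ _ _ Hseg1) as (D2 & r2 & a2 & b2 & Hseg2 & Hlen2).
    exists D2, r2, a2, b2; split; [exact Hseg2 |].
    apply Rle_trans with ((lamL - lamR) ^ n * (b1 - a1)); [exact Hlen1 |].
    replace ((lamL - lamR) ^ S n * (b2 - a2))
      with ((lamL - lamR) ^ n * ((lamL - lamR) * (b2 - a2))) by (simpl; ring).
    apply Rmult_le_compat_l; [apply pow_le; lra | exact Hlen2].
Qed.

Lemma good_segment_long U D r a b L : good_segment U D r a b ->
  exists n D' r' a' b', good_segment (Nat.iter n (image g) U) D' r' a' b' /\ L <= b' - a'.
Proof.
  intros Hseg; pose proof Hseg as [Hab _].
  pose proof (Rmax_l L 1) as HL; pose proof (Rmax_r L 1) as H1.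
  set (L' := Rmax L 1) in *.
  destruct (pow_lt_1_zero (lamL - lamR)) with ((b - a) / L') as [N HN].
  - rewrite Rabs_pos_eq; lra.
  - apply Rdiv_lt_0_compat; lra.
  - specialize (HN N (le_n N)); rewrite Rabs_pos_eq in HN by (apply pow_le; lra).
    destruct (good_segment_iter U D r a b Hseg N) as (D' & r' & a' & b' & Hseg' & Hlen).
    exists N, D', r', a', b'; split; [exact Hseg' |].
    assert ((lamL - lamR) ^ N * L' < b - a).
    { replace (b - a) with ((b - a) / L' * L') by (field; lra).
      apply Rmult_lt_compat_r; [lra | exact HN]. }
    pose proof (pow_le (lamL - lamR) N).
    nra.
Qed.

Definition gap : R := (/ lamL - 1) / 2.

Definition trap_rate : R := gap * (1 + gap - / muL).

(* kappa := 1/muL + gap lies strictly between 1/muL and 1/lamL + 1/muL - 1, so g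
   increases y on the trap and keeps x - 1 + kappa y nonnegative there once
   y >= 1/trap_rate, where trap_rate = (kappa - 1/muL) (1/lamL - kappa). *)
Definition trap (p : R * R) : Prop :=
  / trap_rate <= snd p /\ 0 <= fst p - 1 + (/ muL + gap) * snd p.

Lemma gap_pos : 0 < gap.
Proof.
  unfold gap; assert (1 < / lamL); [| lra].
  rewrite <- Rinv_1; apply Rinv_lt_contravar; lra.
Qed.

Lemma trap_rate_pos : 0 < trap_rate.
Proof.
  pose proof gap_pos; pose proof inv_muL_bounds.
  unfold trap_rate; apply Rmult_lt_0_compat; lra.
Qed.

Lemma trap_step p : trap p -> trap (g p) /\ (1 + gap) * snd p <= snd (g p).
Proof.
  destruct p as [x y]; unfold trap; cbn [fst snd]; intros [Hy Hx].
  pose proof gap_pos; pose proof trap_rate_pos; pose proof inv_muL_bounds.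
  assert (Hrate : 1 <= trap_rate * y).
  { rewrite <- (Rinv_r trap_rate) by lra; apply Rmult_le_compat_l; lra. }
  assert (0 < / trap_rate) by (apply Rinv_0_lt_compat; lra).
  rewrite g_left by (cbn; lra); unfold inv_piece; cbn [fst snd].
  assert (Ei : / lamL = 1 + 2 * gap) by (unfold gap; lra).
  replace ((lamL + muL) * y / (lamL * muL)) with ((/ lamL + / muL) * y) by (field; lra).
  replace (- y / (lamL * muL)) with (- (/ lamL * / muL) * y) by (field; lra).
  rewrite Ei.
  set (y' := x + (1 + 2 * gap + / muL) * y - 1).
  assert (Hy' : (1 + gap) * y <= y') by (unfold y'; lra).
  assert (Erate : (/ muL + gap) * (1 + gap) - (1 + 2 * gap) * / muL = trap_rate)
    by (unfold trap_rate; ring).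
  split; [split |]; nra.
Qed.

Lemma trap_iter p n : trap p ->
  trap (Nat.iter n g p) /\ (1 + gap) ^ n * snd p <= snd (Nat.iter n g p).
Proof.
  intros Hp; pose proof gap_pos; induction n as [| n [Htrap Hgrow]].
  - split; [exact Hp | simpl; lra].
  - rewrite Nat.iter_succ; destruct (trap_step _ Htrap) as [Htrap' Hstep].
    split; [exact Htrap' |].
    apply Rle_trans with ((1 + gap) * snd (Nat.iter n g p)); [| exact Hstep].
    simpl; rewrite Rmult_assoc; apply Rmult_le_compat_l; lra.
Qed.

Lemma trap_escapes p n : trap (Nat.iter n g p) -> norm_to_infty (fun i => Nat.iter i g p).
Proof.
  intros Htrap M; pose proof gap_pos; pose proof trap_rate_pos.
  set (q := Nat.iter n g p) in *.
  assert (Hq : 0 < snd q)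
    by (destruct Htrap as [Hq _]; pose proof (Rinv_0_lt_compat _ trap_rate_pos); lra).
  destruct (Pow_x_infinity (1 + gap)) with ((Rabs M + 1) / snd q) as [N HN];
    [rewrite Rabs_pos_eq; lra |].
  exists (N + n)%nat; intros i Hi.
  replace i with ((i - n) + n)%nat by lia; rewrite Nat.iter_add; fold q.
  specialize (HN (i - n)%nat ltac:(lia)).
  rewrite Rabs_pos_eq in HN by (apply pow_le; lra).
  destruct (trap_iter q (i - n) Htrap) as [_ Hgrow].
  assert (Rabs M + 1 <= (1 + gap) ^ (i - n) * snd q).
  { replace (Rabs M + 1) with ((Rabs M + 1) / snd q * snd q) by (field; lra).
    apply Rmult_le_compat_r; lra. }
  pose proof (Rle_abs M).
  pose proof (Rabs_pos M); clearbody q.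
  eapply Rlt_le_trans; [| apply norm2_ge_snd]; lra.
Qed.

Definition trap_height : R := / trap_rate + B / gap.

Lemma B_pos : 0 < B.
Proof. pose proof inv_muL_bounds; nra. Qed.

Lemma graph_pt_trap D r y : in_cone r -> Rabs D <= B -> trap_height <= y ->
  trap (graph_pt D r y).
Proof.
  intros [Hr _] HD Hy; unfold trap, graph_pt, trap_height in *; cbn [fst snd].
  pose proof gap_pos; pose proof B_pos; pose proof (Rinv_0_lt_compat _ trap_rate_pos).
  assert (0 <= B / gap) by (apply Rlt_le, Rdiv_lt_0_compat; lra).
  assert (B <= gap * y).
  { apply Rle_trans with (gap * (B / gap)); [right; field; lra |].
    apply Rmult_le_compat_l; lra. }
  assert (0 <= (r + / muL) * y) by (apply Rmult_le_pos; lra).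
  pose proof (Rle_abs (- D)); rewrite Rabs_Ropp in *.
  split; lra.
Qed.

Lemma good_segment_meets_trap S D r a b : good_segment S D r a b ->
  2 * trap_height + B <= b - a -> exists q, trap q /\ (S q \/ image g S q).
Proof.
  intros (Hab & Hr & HD & HS) Hlen.
  destruct (Rle_lt_dec trap_height b) as [Hb | Hb].
  - exists (graph_pt D r b); split; [now apply graph_pt_trap | left; apply HS; lra].
  - pose proof B_pos; pose proof (stretch_right r Hr) as Hs.
    assert (Hs1 : stretch lamR muR r <= -1) by nra.
    destruct (g_graph_right D r Hr HD) as (D' & r' & Hr' & HD' & Hg).
    exists (g (graph_pt D r a)); rewrite Hg by lra; split.
    + apply graph_pt_trap; auto.
      pose proof (Rle_abs (- D)); rewrite Rabs_Ropp in *.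
      nra.
    + right; exists (graph_pt D r a); split; [apply HS; lra | apply Hg; lra].
Qed.

Lemma good_segment_escapes U D r a b : good_segment U D r a b ->
  exists p, U p /\ norm_to_infty (fun i => Nat.iter i g p).
Proof.
  intros Hseg.
  destruct (good_segment_long U D r a b (2 * trap_height + B) Hseg)
    as (n & D' & r' & a' & b' & Hseg' & Hlen).
  destruct (good_segment_meets_trap _ _ _ _ _ Hseg' Hlen) as (q & Htrap & Hq).
  assert (Hreach : exists m, Nat.iter m (image g) U q)
    by (destruct Hq; [exists n | exists (S n)]; assumption).
  destruct Hreach as [m Hm]; destruct (iter_image g U m q Hm) as (p & Hp & <-).
  exists p; split; [exact Hp | now apply trap_escapes with m].
Qed.

End Segments.

Lemma one_le_mul_of_inv_le c B : 0 < c -> / c <= B -> 1 <= B * c.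
Proof.
  intros Hc HB; rewrite <- (Rinv_l c) by lra.
  apply Rmult_le_compat_r; lra.
Qed.

Lemma escaping_points_dense lamL muL lamR muR g :
  0 < lamL -> 1 < muL -> lamR < 0 -> muR < -1 -> lamL - lamR < 1 ->
  (forall p, 0 <= snd p -> g p = inv_piece (lamL + muL) (lamL * muL) p) ->
  (forall p, snd p <= 0 -> g p = inv_piece (lamR + muR) (lamR * muR) p) ->
  dense2 (fun p => norm_to_infty (fun i => Nat.iter i g p)).
Proof.
  intros HlL HmL HlR HmR Hsum HgL HgR p0 eps Heps.
  pose proof (inv_muL_bounds muL HmL); pose proof (inv_muR_bounds muR HmR).
  pose proof (Rmax_l (/ (1 - / muL)) (/ (1 + / muR))).
  pose proof (Rmax_r (/ (1 - / muL)) (/ (1 + / muR))).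
  pose proof (Rmax_r (Rabs (fst p0 - 1)) (Rmax (/ (1 - / muL)) (/ (1 + / muR)))).
  set (B := Rmax (Rabs (fst p0 - 1)) _) in *.
  destruct (good_segment_escapes lamL muL lamR muR B HlL HmL HlR HmR Hsum)
    with (g := g) (U := fun q => norm2 (fst q - fst p0, snd q - snd p0) < eps)
         (D := fst p0 - 1) (r := 0) (a := snd p0 - eps / 2) (b := snd p0 + eps / 2)
    as (p & Hp & Hesc); auto.
  - apply one_le_mul_of_inv_le; lra.
  - apply one_le_mul_of_inv_le; lra.
  - split; [lra | split; [unfold in_cone; lra | split; [apply Rmax_l |]]].
    intros y Hy; unfold graph_pt; cbn [fst snd].
    replace (1 + (fst p0 - 1) + 0 * y - fst p0) with 0 by ring.
    rewrite norm2_vertical; apply Rabs_def1; lra.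
  - exists p; split; assumption.
Qed.

Theorem lemma6p3 (xi : params) (g : R * R -> R * R) :
  inPhi xi ->
  (forall p, g (fxi xi p) = p) ->
  (forall p, fxi xi (g p) = p) ->
  J2 xi < 1 ->
  dense2 (fun p => norm_to_infty (fun i => Nat.iter i g p)).
Proof.
  intros Hphi Hgf _ HJ.
  destruct (lamLs_spec xi Hphi) as (HlL & HmL & EL).
  destruct (lamRs_spec xi Hphi) as (HlR & HmR & ER).
  pose proof (J2_ge_stable_sum xi HlR).
  destruct Hphi as (_ & HdL & _ & HdR).
  apply (escaping_points_dense (lamLs xi) (tauL xi - lamLs xi) (lamRs xi) (tauR xi - lamRs xi));
    try lra.
  - intros p Hp; rewrite (inverse_on_left xi g p HdL Hgf Hp), EL.
    f_equal; ring.
  - intros p Hp; rewrite (inverse_on_right xi g p HdR Hgf Hp), ER.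
    f_equal; ring.
Qed.
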